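(* For any $\beta_0,\beta_1\in(0,\pi)$ there exists a finite point set $P$ in the plane for which the function $\beta\mapsto\operatorname{area}(\mathcal{O}_\beta\mathcal{H}(P))$ on $(0,\pi)$ has local maxima at $\beta_0$ and at $\beta_1$.
   Context: For $\beta\in(0,\pi)$, $\mathcal{O}_\beta$ is the pair of lines through the origin with slopes $0$ and $\tan\beta$. Given an apex $a$, every point is uniquely $a+s(1,0)+t(\cos\beta,\sin\beta)$; an $\mathcal{O}_\beta$-quadrant with apex $a$ is one of the four open sets of such points with $s>0,t>0$; $s<0,t>0$; $s>0,t<0$; or $s<0,t<0$. A quadrant is $P$-free if it contains no point of $P$, and the $\mathcal{O}_\beta$-hull $\mathcal{O}_\beta\mathcal{H}(P)$ is the plane minus the union of all $P$-free $\mathcal{O}_\beta$-quadrants. $\operatorname{area}$ denotes Lebesgue measure. *)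

From HB Require Import structures.
From mathcomp Require Import all_boot all_order all_algebra.
From mathcomp Require Import all_classical all_reals all_analysis.
Set Implicit Arguments. Unset Strict Implicit. Unset Printing Implicit Defensive.
Import Order.TTheory GRing.Theory Num.Theory.
Local Open Scope classical_set_scope.
Local Open Scope ring_scope.

(* The O_beta-quadrant with apex a and sign pattern (sg1, sg2):
   points a + s(1,0) + t(cos b, sin b) with sg1*s > 0 and sg2*t > 0,
   where sg = true means "> 0" and sg = false means "< 0". *)
Definition sgn_pos (R : realType) (sg : bool) (x : R) : Prop :=
  if sg then 0 < x else x < 0.

Definition quadrant (R : realType) (b : R) (a : R * R) (sg1 sg2 : bool)
  : set (R * R) :=
  [set p | exists s t : R, sgn_pos sg1 s /\ sgn_pos sg2 t /\
     p = (a.1 + s + t * cos b, a.2 + t * sin b)].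

Definition Pfree (R : realType) (P : seq (R * R)) (Q : set (R * R)) : Prop :=
  forall q, q \in P -> ~ Q q.

Definition Ohull (R : realType) (b : R) (P : seq (R * R)) : set (R * R) :=
  ~` [set p | exists (a : R * R) (sg1 sg2 : bool),
        Pfree P (quadrant b a sg1 sg2) /\ quadrant b a sg1 sg2 p].

Definition area (R : realType) (A : set (R * R)) : \bar R :=
  ((@lebesgue_measure R) \x (@lebesgue_measure R))%E A.

Definition hull_area (R : realType) (P : seq (R * R)) (b : R) : \bar R :=
  area (Ohull b P).

Definition strict_local_max_on_0pi (R : realType) (f : R -> \bar R) (x0 : R)
  : Prop :=
  exists2 e : R, 0 < e &
    forall x : R, 0 < x -> x < pi -> 0 < `|x - x0| < e -> (f x < f x0)%E.

From mathcomp Require Import all_boot all_order all_algebra.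
From mathcomp Require Import all_classical all_reals all_analysis.
From mathcomp Require Import ring lra measurable_realfun.
Import Order.TTheory GRing.Theory Num.Theory numFieldNormedType.Exports.
Set Implicit Arguments. Unset Strict Implicit. Unset Printing Implicit Defensive.
Local Open Scope ring_scope.
Local Open Scope classical_set_scope.

(* In coordinates sheared by c = cot b, a point lies in the O_b-hull of a
   finite set P iff each of the four closed quadrants at it meets P. We take P
   to be two far-apart five-point gadgets. Up to finitely many horizontal
   lines, the hull is then a union of two slabs per gadget, whose widths are
   piecewise affine in c; the area contributed by the first (second) gadget has
   a strict tent-shaped maximum at c = cot b0 (cot b1). When cot b0 < cot b1
   the gadgets are scaled down so that near cot b0 the second contributes
   nothing and near cot b1 the first is affine with a smaller slope than the
   second. As cot is a continuous injection on (0, pi), the area has strict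
   local maxima at b0 and b1. *)

Definition sgn_nn (R : numDomainType) (sg : bool) (x : R) : Prop :=
  if sg then 0 <= x else x <= 0.

Definition closed_quadrant (R : numDomainType) (c : R) (sg1 sg2 : bool)
    (p q : R * R) : Prop :=
  sgn_nn sg2 (q.2 - p.2) /\ sgn_nn sg1 (q.1 - p.1 - (q.2 - p.2) * c).

Lemma exists_mem_foldr (T : eqType) (C : T -> Prop) (l : seq T) :
  (exists2 q, q \in l & C q) <-> foldr (fun q acc => C q \/ acc) False l.
Proof.
elim: l => [|a l IH] /=; first by split=> // -[q]; rewrite in_nil.
rewrite -IH; split.
- by move=> [q]; rewrite in_cons => /orP[/eqP->|ql] Cq; [left|right; exists q].
- case=> [Ca|[q ql Cq]]; first by exists a; rewrite ?mem_head.
  by exists q; rewrite // in_cons ql orbT.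
Qed.

Lemma seq_uniform_neg (R : realDomainType) (T : eqType) (l : seq T) (h : T -> R) :
  (forall q, q \in l -> h q < 0) ->
  exists2 e : R, 0 < e & forall q, q \in l -> h q <= - e.
Proof.
elim: l => [|x l IH] hl; first by exists 1 => // q; rewrite in_nil.
have [e e0 he] : exists2 e : R, 0 < e & forall q, q \in l -> h q <= - e.
  by apply: IH => q ql; apply: hl; rewrite in_cons ql orbT.
exists (Num.min e (- h x)); first by rewrite lt_min e0 oppr_gt0 hl ?mem_head.
move=> q; rewrite in_cons => /orP[/eqP->|ql]; first by rewrite lerNr ge_min lexx orbT.
by rewrite (le_trans (he q ql)) // lerN2 ge_min lexx.
Qed.

Definition cot (R : realType) (b : R) : R := cos b / sin b.

Lemma quadrantE (R : realType) (b : R) a sg1 sg2 p : 0 < sin b ->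
  quadrant b a sg1 sg2 p <->
  sgn_pos sg2 (p.2 - a.2) /\ sgn_pos sg1 (p.1 - a.1 - (p.2 - a.2) * cot b).
Proof.
move=> sb0; have sb_neq0 : sin b != 0 by rewrite gt_eqF.
rewrite /cot; split.
- case=> s [t [hs [ht ->]]] /=.
  have -> : a.1 + s + t * cos b - a.1 - (a.2 + t * sin b - a.2) * (cos b / sin b) = s.
    by field.
  have -> : a.2 + t * sin b - a.2 = t * sin b by ring.
  split=> //; move: ht; rewrite /sgn_pos; case: sg2 => ht.
  + exact: mulr_gt0.
  + by rewrite pmulr_llt0.
- move=> [h2 h1]; exists (p.1 - a.1 - (p.2 - a.2) * (cos b / sin b)).
  exists ((p.2 - a.2) / sin b); split => //; split.
  + move: h2; rewrite /sgn_pos; case: sg2 => h2.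
    * by rewrite divr_gt0.
    * by rewrite pmulr_llt0 ?invr_gt0.
  + by case: p {h1 h2} => x y /=; congr (_, _); field.
Qed.

(* A closed quadrant at p missing the finite set P can be pushed back by a
   uniform margin, which yields an open P-free quadrant containing p. *)
Lemma OhullE (R : realType) (b : R) (P : seq (R * R)) p : 0 < sin b ->
  Ohull b P p <->
  forall sg1 sg2, exists2 q, q \in P & closed_quadrant (cot b) sg1 sg2 p q.
Proof.
move=> sb0; set c := cot b; rewrite /Ohull /setC /=; split; last first.
  move=> Hp [a [sg1 [sg2 [afree pa]]]].
  have [q qP [hq2 hq1]] := Hp sg1 sg2.
  apply: (afree q qP); move: pa hq1 hq2 {afree}; rewrite !quadrantE // -/c.
  by rewrite /sgn_nn /sgn_pos; case: sg1; case: sg2 => /=; lra.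
move=> Hp sg1 sg2; apply: contrapT => Hno.
pose sv (sg : bool) (x : R) := if sg then x else - x.
pose h q := Num.min (sv sg2 (q.2 - p.2)) (sv sg1 (q.1 - p.1 - (q.2 - p.2) * c)).
have [q qP|e e0 he] := @seq_uniform_neg _ _ P h.
  have nq : ~ closed_quadrant c sg1 sg2 p q by move=> pq; apply: Hno; exists q.
  rewrite /h gt_min; apply/orP; move: nq; rewrite /closed_quadrant /sgn_nn /sv.
  by clear Hno h; case: sg1; case: sg2 => /=; lra.
apply: Hp; exists (p.1 - sv sg1 e - sv sg2 e * c, p.2 - sv sg2 e), sg1, sg2.
split => [q qP|]; rewrite quadrantE //= -/c /sgn_pos /sv.
  move: (he q qP); rewrite /h ge_min => /orP; clear Hno he h.
  by case: sg1; case: sg2 => /=; lra.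
by clear Hno he h; case: sg1; case: sg2 => /=; lra.
Qed.

Lemma measurable_shear (R : realType) (c : R) :
  measurable_fun [set: R * R] (fun p : R * R => p.1 - p.2 * c).
Proof.
apply: measurable_funB; first exact: measurable_fst.
by apply: measurable_funM; [exact: measurable_snd | exact: measurable_cst].
Qed.

Lemma measurable_sgn_nn (R : realType) (f : R * R -> R) sg :
  measurable_fun [set: R * R] f -> measurable [set p | sgn_nn sg (f p)].
Proof.
move=> mf; have -> : [set p | sgn_nn sg (f p)] =
    setT `&` f @^-1` (if sg then `[0, +oo[ else `]-oo, 0]).
  by apply/seteqP; split => p /=; rewrite /sgn_nn; case: sg => /=;
    rewrite ?in_itv /= ?andbT // => -[].
by apply: mf => //; case: sg; exact: measurable_itv.
Qed.

Lemma measurable_Ohull (R : realType) (b : R) (P : seq (R * R)) : 0 < sin b ->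
  measurable (Ohull b P).
Proof.
move=> sb0; set c := cot b.
pose U sg1 sg2 := \bigcup_(q in [set` P]) [set p | closed_quadrant c sg1 sg2 p q].
have mU sg1 sg2 : measurable (U sg1 sg2).
  apply: fin_bigcup_measurable => [|q _]; first exact: finite_seq.
  apply: measurableI; apply: measurable_sgn_nn.
    by apply: measurable_funB => //; exact: measurable_snd.
  rewrite (_ : (fun p => _) = fun p => (q.1 - q.2 * c) - (p.1 - p.2 * c)).
    by apply: measurable_funB => //; exact: measurable_shear.
  by apply/funext => p; ring.
have -> : Ohull b P = U true true `&` U true false `&` U false true `&` U false false.
  apply/seteqP; split => p.
    by move=> /(OhullE _ _ sb0) h; split; [split; [split|]|]; apply: h.
  by move=> [[[h1 h2] h3] h4]; apply/OhullE => // -[] [].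
by repeat apply: measurableI.
Qed.

Definition slab (R : numDomainType) (y0 y1 lo hi c : R) : set (R * R) :=
  [set p | y0 < p.2 < y1 /\ lo <= p.1 - p.2 * c <= hi].

Definition width (R : numDomainType) (lo hi : R) : R := Num.max 0 (hi - lo).

Lemma measurable_slab (R : realType) (y0 y1 lo hi c : R) :
  measurable (slab y0 y1 lo hi c).
Proof.
have -> : slab y0 y1 lo hi c = (setT `&` snd @^-1` `]y0, y1[) `&`
     (setT `&` (fun p : R * R => p.1 - p.2 * c) @^-1` `[lo, hi]).
  by apply/seteqP; split => p /=; rewrite /slab /= !in_itv /= => -[] //= [_ h1] [].
apply: measurableI.
  by apply: measurable_snd => //; exact: measurable_itv.
by apply: measurable_shear => //; exact: measurable_itv.
Qed.

Lemma lebesgue_measure_itv_width (R : realType) (lo hi : R) :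
  lebesgue_measure ([set` `[lo, hi]%R] : set R) = (width lo hi)%:E.
Proof.
apply: (etrans (lebesgue_measure_itv _)); rewrite /= lte_fin /width.
by case: ltP => h; [rewrite max_r ?EFinB //; lra | rewrite max_l //; lra].
Qed.

Lemma lebesgue_measure_itv_oo (R : realType) (a b : R) : a <= b ->
  lebesgue_measure ([set` `]a, b[%R] : set R) = (b - a)%:E.
Proof.
move=> ab; apply: (etrans (lebesgue_measure_itv _)); rewrite /= lte_fin.
case: ltP => [_|ba]; first by rewrite EFinB.
suff -> : b = a by rewrite subrr.
by apply/eqP; rewrite eq_le ab ba.
Qed.

(* By Cavalieri along horizontal lines: every section of the slab is a
   segment of length [width lo hi]. *)
Lemma area_slab (R : realType) (y0 y1 lo hi c : R) : y0 <= y1 ->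
  area (slab y0 y1 lo hi c) = (width lo hi * (y1 - y0))%:E.
Proof.
move=> y01; rewrite /area (@product_measure_unique _ _ _ _ R lebesgue_measure
   lebesgue_measure (lebesgue_measure \x^ lebesgue_measure)%E); last 2 first.
- by move=> A B mA mB; apply: product_measure2E.
- exact: measurable_slab.
have sectionE : lebesgue_measure \o ysection (slab y0 y1 lo hi c) =
    fun y => ((width lo hi)%:E * (\1_(`]y0, y1[ : set R) y)%:E)%E.
  apply/funext => y; rewrite indicE /=.
  have [yin|yout] := boolP (y \in `]y0, y1[); last first.
    rewrite mule0 (_ : ysection _ y = set0) ?measure0 //.
    apply/seteqP; split => x //; rewrite /ysection /= in_setE /slab /=.
    by move=> [h _]; move/negP: yout; apply; rewrite in_setE /= in_itv /= h.
  rewrite mule1 (_ : ysection _ y = [set` `[lo + y * c, hi + y * c]%R]).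
    rewrite lebesgue_measure_itv_width /width.
    by have -> : hi + y * c - (lo + y * c) = hi - lo by ring.
  move: yin; rewrite inE /= in_itv /= => yin.
  apply/seteqP; split => x; rewrite /ysection /= in_setE /slab /= in_itv /=.
    by move=> [_ /andP[h1 h2]]; apply/andP; split; lra.
  by move=> /andP[h1 h2]; split => //; apply/andP; split; lra.
rewrite [X in X = _](_ : _ = \int[lebesgue_measure]_y
  (lebesgue_measure \o ysection (slab y0 y1 lo hi c)) y)%E //.
rewrite sectionE ge0_integralZl ?integral_indic ?setIT //; last 2 first.
- exact: measurableT_comp.
- by rewrite lee_fin le_max lexx.
transitivity ((width lo hi)%:E * (y1 - y0)%:E)%E; last by rewrite -EFinM.
by congr (_ * _)%E; apply: lebesgue_measure_itv_oo.
Qed.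

Lemma measurable_seq_set (R : realType) (ys : seq R) : measurable [set` ys].
Proof.
apply: countable_measurable; first exact: measurable_set1.
exact/finite_set_countable/finite_seq.
Qed.

Lemma area_hlines (R : realType) (ys : seq R) : area (setT `*` [set` ys]) = 0%E.
Proof.
rewrite /area product_measure1E //; last exact: measurable_seq_set.
transitivity (lebesgue_measure [set: R] * 0)%E; last exact: mule0.
by congr (_ * _)%E; exact/countable_lebesgue_measure0/finite_set_countable/finite_seq.
Qed.

Lemma measure_null_sandwich d (T : ringOfSetsType d) (R : realFieldType)
    (mu : {measure set T -> \bar R}) (A B N : set T) :
  measurable A -> measurable B -> measurable N -> mu N = 0%E ->
  A `<=` B -> B `<=` A `|` N -> mu B = mu A.
Proof.
move=> mA mB mN N0 AB BAN; apply/eqP.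
rewrite eq_le -{1}(measureU0 (mu := mu) mA mN N0).
by rewrite !le_measure ?inE //; exact: measurableU.
Qed.

(* Sheared by [c0], gadget A is the pattern x = 0, 2k on row 0, x = k, 3k on
   row 1 and x = 0 on row 2. Sheared by [c1], gadget B is its point reflection
   stretched vertically by 2 (rows 7, 5, 3) and moved to x = X - 7 c1. *)
Definition gadget (R : numDomainType) (c0 c1 k X : R) : seq (R * R) :=
  [:: (0, 0); (2 * k, 0); (k + c0, 1); (3 * k + c0, 1); (2 * c0, 2);
      (X, 7); (X - 2 * k, 7); (X - k - 2 * c1, 5); (X - 3 * k - 2 * c1, 5);
      (X - 4 * c1, 3)].

Definition gadget_rows (R : numDomainType) : seq R := [:: 0; 1; 2; 3; 5; 7].

(* With all slopes within [M] of 0, this [X] keeps the two gadgets from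
   interacting. *)
Definition admissible (R : numDomainType) (c0 c1 k M X c : R) : Prop :=
  [/\ 0 < k <= 1, - M <= c <= M, - M <= c0 <= M, - M <= c1 <= M
    & X = 20 * M + 20].

(* Bounds, in the sheared coordinate x - y c, of the hull on the strips
   between rows 0-1 and 1-2 (gadget A) and rows 3-5 and 5-7 (gadget B). *)
Definition loA1 (R : realDomainType) (c0 k c : R) :=
  Num.max 0 (Num.min (k - (c - c0)) (- 2 * (c - c0))).
Definition hiA1 (R : realDomainType) (k : R) := 2 * k.
Definition loA2 (R : realDomainType) (c0 k c : R) :=
  Num.max (Num.min 0 (k - (c - c0))) (- 2 * (c - c0)).
Definition hiA2 (R : realDomainType) (c0 k c : R) :=
  Num.max (2 * k) (3 * k - (c - c0)).
Definition loB2 (R : realDomainType) (c1 k X c : R) :=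
  Num.min (X - 7 * c - 2 * k) (X - 7 * c - 3 * k + 2 * (c - c1)).
Definition hiB2 (R : realDomainType) (c1 k X c : R) :=
  Num.min (Num.max (X - 7 * c) (X - 7 * c - k + 2 * (c - c1)))
    (X - 7 * c + 4 * (c - c1)).
Definition loB1 (R : realDomainType) (k X c : R) := X - 7 * c - 2 * k.
Definition hiB1 (R : realDomainType) (c1 k X c : R) :=
  Num.min (X - 7 * c)
    (Num.max (X - 7 * c - k + 2 * (c - c1)) (X - 7 * c + 4 * (c - c1))).

Definition gadget_slabs (R : realDomainType) (c0 c1 k X c : R) : set (R * R) :=
  slab 0 1 (loA1 c0 k c) (hiA1 k) c `|` slab 1 2 (loA2 c0 k c) (hiA2 c0 k c) c `|`
  slab 3 5 (loB2 c1 k X c) (hiB2 c1 k X c) c `|` slab 5 7 (loB1 k X c) (hiB1 c1 k X c) c.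

Lemma gadget_hull_sub_slabs (R : realDomainType) (c0 c1 k M X c : R) p :
  admissible c0 c1 k M X c ->
  (forall sg1 sg2, exists2 q, q \in gadget c0 c1 k X & closed_quadrant c sg1 sg2 p q) ->
  gadget_slabs c0 c1 k X c p \/ p.2 \in gadget_rows R.
Proof.
move=> [hk hc hc0 hc1 hX] Hp.
have W sg1 sg2 := (exists_mem_foldr _ _).1 (Hp sg1 sg2).
move: (W true false) (W false false) (W false true) (W true true) => /=.
rewrite /closed_quadrant /sgn_nn /= => Wrd Wld Wlu Wru; clear W Hp.
case/boolP: (p.2 \in gadget_rows R) => [|off_rows]; [by right | left].
move: off_rows; rewrite !inE => off_rows.
rewrite /gadget_slabs /slab /loA1 /hiA1 /loA2 /hiA2 /loB2 /hiB2 /loB1 /hiB1 /=.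
rewrite !(ge_max, ge_min, le_max, le_min).
have [hy|[hy|[hy|[hy|[hy|[hy|hy]]]]]] : p.2 < 0 \/ 0 < p.2 < 1 \/ 1 < p.2 < 2 \/
    2 < p.2 < 3 \/ 3 < p.2 < 5 \/ 5 < p.2 < 7 \/ 7 < p.2 by clear -off_rows; lra.
- by exfalso; clear -hy Wld hk hc hc0 hc1 hX; lra.
- by left; left; left; split=> //; clear -hy Wrd Wld Wlu hk hc hc0 hc1 hX; lra.
- by left; left; right; split=> //; clear -hy Wrd Wld Wlu hk hc hc0 hc1 hX; lra.
- by exfalso; clear -hy Wrd Wlu hk hc hc0 hc1 hX; lra.
- by left; right; split=> //; clear -hy Wrd Wlu Wru hk hc hc0 hc1 hX; lra.
- by right; split=> //; clear -hy Wrd Wlu Wru hk hc hc0 hc1 hX; lra.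
- by exfalso; clear -hy Wru hk hc hc0 hc1 hX; lra.
Qed.

Lemma gadget_slabs_sub_hull (R : realDomainType) (c0 c1 k M X c : R) p :
  admissible c0 c1 k M X c -> gadget_slabs c0 c1 k X c p ->
  forall sg1 sg2, exists2 q, q \in gadget c0 c1 k X & closed_quadrant c sg1 sg2 p q.
Proof.
move=> [hk hc hc0 hc1 hX].
rewrite /gadget_slabs /slab /loA1 /hiA1 /loA2 /hiA2 /loB2 /hiB2 /loB1 /hiB1 /=.
rewrite !(ge_max, ge_min, le_max, le_min).
move=> Sp sg1 sg2; apply/exists_mem_foldr; rewrite /= /closed_quadrant /sgn_nn /=.
by case: Sp => [[[[hy hx]|[hy hx]]|[hy hx]]|[hy hx]]; case: sg1; case: sg2; lra.
Qed.

Definition areaA (R : realDomainType) (c0 k c : R) : R :=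
  width (loA1 c0 k c) (hiA1 k) + width (loA2 c0 k c) (hiA2 c0 k c).
Definition areaB (R : realDomainType) (c1 k X c : R) : R :=
  2 * width (loB2 c1 k X c) (hiB2 c1 k X c) + 2 * width (loB1 k X c) (hiB1 c1 k X c).
Definition gadget_area (R : realDomainType) (c0 c1 k X c : R) : R :=
  areaA c0 k c + areaB c1 k X c.

Lemma area_gadget_slabs (R : realType) (c0 c1 k X c : R) :
  area (gadget_slabs c0 c1 k X c) = (gadget_area c0 c1 k X c)%:E.
Proof.
transitivity (area (slab 0 1 (loA1 c0 k c) (hiA1 k) c) +
  area (slab 1 2 (loA2 c0 k c) (hiA2 c0 k c) c) +
  area (slab 3 5 (loB2 c1 k X c) (hiB2 c1 k X c) c) +
  area (slab 5 7 (loB1 k X c) (hiB1 c1 k X c) c))%E.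
  rewrite /area /gadget_slabs !measureU //;
    do ?[exact: measurable_slab | apply: measurableU |
         by apply/seteqP; split=> // p /= [+ []]; rewrite /slab /=; lra].
rewrite !area_slab; [rewrite -!EFinD | lra..].
by congr (_%:E); rewrite /gadget_area /areaA /areaB; ring.
Qed.

Lemma hull_area_gadget (R : realType) (c0 c1 k M X b : R) : 0 < sin b ->
  admissible c0 c1 k M X (cot b) ->
  hull_area (gadget c0 c1 k X) b = (gadget_area c0 c1 k X (cot b))%:E.
Proof.
move=> sb0 adm; rewrite /hull_area -area_gadget_slabs /area.
apply: (measure_null_sandwich (mu := (@lebesgue_measure R \x @lebesgue_measure R)%E)
  (N := setT `*` [set` gadget_rows R])).
- by rewrite /gadget_slabs; repeat apply: measurableU; exact: measurable_slab.
- exact: measurable_Ohull.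
- by apply: measurableX => //; exact: measurable_seq_set.
- exact: area_hlines.
- by move=> p Sp; apply/OhullE => //; exact: gadget_slabs_sub_hull adm Sp.
- move=> p /(OhullE _ _ sb0) /(gadget_hull_sub_slabs adm) [Sp|rows_p]; first by left.
  by right; split.
Qed.

Lemma areaA_right (R : realFieldType) (c0 k c : R) : 0 < k ->
  0 <= c - c0 <= k / 4 -> areaA c0 k c = 5 * k - (c - c0).
Proof.
move=> k0 hc; rewrite /areaA /width /hiA1 /loA1 /hiA2 /loA2.
rewrite (@min_r _ _ (k - (c - c0))); last lra.
rewrite (@max_l _ _ 0 (-2 * (c - c0))); last lra.
rewrite (@min_l _ _ 0); last lra.
rewrite (@max_l _ _ 0 (-2 * (c - c0))); last lra.
rewrite (@max_r _ _ (2 * k)); last lra.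
rewrite !max_r; lra.
Qed.

Lemma areaA_left (R : realFieldType) (c0 k c : R) : 0 < k ->
  - (k / 4) <= c - c0 <= 0 -> areaA c0 k c = 5 * k + 3 * (c - c0).
Proof.
move=> k0 hc; rewrite /areaA /width /hiA1 /loA1 /hiA2 /loA2.
rewrite (@min_r _ _ (k - (c - c0))); last lra.
rewrite (@max_r _ _ 0 (-2 * (c - c0))); last lra.
rewrite (@min_l _ _ 0); last lra.
rewrite (@max_r _ _ 0 (-2 * (c - c0))); last lra.
rewrite (@max_r _ _ (2 * k)); last lra.
rewrite !max_r; lra.
Qed.

Lemma areaA_far_right (R : realFieldType) (c0 k c : R) : 0 < k ->
  k <= c - c0 -> areaA c0 k c = 3 * k + (c - c0).
Proof.
move=> k0 hc; rewrite /areaA /width /hiA1 /loA1 /hiA2 /loA2.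
rewrite (@min_r _ _ (k - (c - c0))); last lra.
rewrite (@max_l _ _ 0 (-2 * (c - c0))); last lra.
rewrite (@min_r _ _ 0); last lra.
rewrite (@max_l _ _ (k - (c - c0))); last lra.
rewrite (@max_l _ _ (2 * k)); last lra.
rewrite !max_r; lra.
Qed.

Lemma areaB_right (R : realFieldType) (c1 k X c : R) : 0 < k ->
  0 <= c - c1 <= k / 4 -> areaB c1 k X c = 10 * k - 4 * (c - c1).
Proof.
move=> k0 hc; rewrite /areaB /width /hiB2 /loB2 /hiB1 /loB1.
rewrite (@max_l _ _ (X - 7 * c)); last lra.
rewrite (@min_l _ _ (X - 7 * c)); last lra.
rewrite (@min_r _ _ (X - 7 * c - 2 * k)); last lra.
rewrite (@max_r _ _ (X - 7 * c - k + 2 * (c - c1))); last lra.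
rewrite (@min_l _ _ (X - 7 * c)); last lra.
rewrite !max_r; lra.
Qed.

Lemma areaB_left (R : realFieldType) (c1 k X c : R) : 0 < k ->
  - (k / 4) <= c - c1 <= 0 -> areaB c1 k X c = 10 * k + 12 * (c - c1).
Proof.
move=> k0 hc; rewrite /areaB /width /hiB2 /loB2 /hiB1 /loB1.
rewrite (@max_l _ _ (X - 7 * c)); last lra.
rewrite (@min_r _ _ (X - 7 * c)); last lra.
rewrite (@min_r _ _ (X - 7 * c - 2 * k)); last lra.
rewrite (@max_r _ _ (X - 7 * c - k + 2 * (c - c1))); last lra.
rewrite (@min_r _ _ (X - 7 * c)); last lra.
rewrite !max_r; lra.
Qed.

Lemma areaB_far_left (R : realFieldType) (c1 k X c : R) : 0 < k ->
  c - c1 <= - (2 * k) -> areaB c1 k X c = 0.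
Proof.
move=> k0 hc; rewrite /areaB /width /hiB2 /loB2 /hiB1 /loB1.
rewrite (@max_l _ _ (X - 7 * c)); last lra.
rewrite (@min_r _ _ (X - 7 * c)); last lra.
rewrite (@min_r _ _ (X - 7 * c - 2 * k)); last lra.
rewrite (@max_l _ _ (X - 7 * c - k + 2 * (c - c1))); last lra.
rewrite (@min_r _ _ (X - 7 * c)); last lra.
rewrite !max_l; lra.
Qed.

Lemma gadget_area_peak0 (R : realFieldType) (c0 c1 k X c : R) : 0 < k ->
  c0 = c1 \/ 8 * k <= c1 - c0 -> c != c0 -> `|c - c0| <= k / 4 ->
  gadget_area c0 c1 k X c < gadget_area c0 c1 k X c0.
Proof.
move=> k0 hsep c_neq; rewrite ler_norml /gadget_area => hc.
have A0 : areaA c0 k c0 = 5 * k by rewrite areaA_right; lra.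
case: hsep => [<-|hsep].
  have B0 : areaB c0 k X c0 = 10 * k by rewrite areaB_right; lra.
  rewrite A0 B0; case: (ltgtP c c0) c_neq => // h _.
    by rewrite areaA_left ?areaB_left; lra.
  by rewrite areaA_right ?areaB_right; lra.
rewrite A0 !areaB_far_left; try lra.
case: (ltgtP c c0) c_neq => // h _.
  by rewrite areaA_left; lra.
by rewrite areaA_right; lra.
Qed.

Lemma gadget_area_peak1 (R : realFieldType) (c0 c1 k X c : R) : 0 < k ->
  c0 = c1 \/ 8 * k <= c1 - c0 -> c != c1 -> `|c - c1| <= k / 4 ->
  gadget_area c0 c1 k X c < gadget_area c0 c1 k X c1.
Proof.
move=> k0 [<-|hsep] c_neq; first by apply: gadget_area_peak0 => //; left.
rewrite ler_norml /gadget_area => hc.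
have B0 : areaB c1 k X c1 = 10 * k by rewrite areaB_right; lra.
rewrite B0 !areaA_far_right; try lra.
case: (ltgtP c c1) c_neq => // h _.
  by rewrite areaB_left; lra.
by rewrite areaB_right; lra.
Qed.

Lemma cot_continuous (R : realType) (b : R) : sin b != 0 -> {for b, continuous (@cot R)}.
Proof. by move=> sb0; apply: cvgM; [exact: continuous_cos | apply: cvgV => //; exact: continuous_sin]. Qed.

Lemma cot_inj (R : realType) (b b' : R) : 0 < b < pi -> 0 < b' < pi ->
  cot b = cot b' -> b = b'.
Proof.
move=> hb hb'; have sb := sin_gt0_pi hb; have sb' := sin_gt0_pi hb'.
rewrite /cot => /eqP; rewrite eqr_div ?(gt_eqF sb) ?(gt_eqF sb') // => /eqP e.
case: (ltgtP b b') => // h.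
- have : 0 < sin (b' - b) by apply: sin_gt0_pi; lra.
  by rewrite sinB; lra.
- have : 0 < sin (b - b') by apply: sin_gt0_pi; lra.
  by rewrite sinB; lra.
Qed.

Lemma strict_local_max_cot (R : realType) (g : R -> \bar R) (f : R -> R) (bs r : R) :
  0 < bs < pi -> 0 < r ->
  (forall b, 0 < b < pi -> `|cot b - cot bs| <= r -> g b = (f (cot b))%:E) ->
  (forall c, c != cot bs -> `|c - cot bs| <= r -> f c < f (cot bs)) ->
  strict_local_max_on_0pi g bs.
Proof.
move=> hbs r0 gE f_max.
have cot_bs : cot x @[x --> bs] --> cot bs.
  by apply: cot_continuous; rewrite gt_eqF // sin_gt0_pi.
have [d /= d0 hd] := (nbhs_ballP _ _).1 ((cvgrPdist_lt _ _).1 cot_bs r r0).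
exists d => // b b0 bpi /andP[b_neq b_near].
have hb : 0 < b < pi by rewrite b0 bpi.
have near_b : `|cot b - cot bs| <= r.
  by rewrite distrC ltW //; apply: hd; rewrite /ball /= distrC.
rewrite gE // (gE bs) ?subrr ?normr0 ?ltW // lte_fin f_max //.
apply: contraTneq b_neq => /(cot_inj hb hbs) ->.
by rewrite subrr normr0 ltxx.
Qed.

Lemma two_peaks_cot_le (R : realType) (b0 b1 : R) : 0 < b0 < pi -> 0 < b1 < pi ->
  cot b0 <= cot b1 ->
  exists P : seq (R * R),
    strict_local_max_on_0pi (hull_area P) b0 /\
    strict_local_max_on_0pi (hull_area P) b1.
Proof.
move=> hb0 hb1; set c0 := cot b0; set c1 := cot b1 => c01.
pose M := `|c0| + `|c1| + 1.
pose k := if c0 == c1 then 1 else Num.min 1 ((c1 - c0) / 8).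
have [hk hsep] : 0 < k <= 1 /\ (c0 = c1 \/ 8 * k <= c1 - c0).
  rewrite /k; case: eqP => [->|c_neq]; first by split; [lra | left].
  have lt01 : c0 < c1 by rewrite lt_neqAle c01 andbT; apply/eqP.
  split; first by rewrite lt_min ge_min lexx /=; apply/andP; split => //; lra.
  have : Num.min 1 ((c1 - c0) / 8) <= (c1 - c0) / 8 by rewrite ge_min lexx orbT.
  by right; lra.
have hk0 : 0 < k by lra.
have adm b : 0 < b < pi -> `|cot b - c0| <= k / 4 \/ `|cot b - c1| <= k / 4 ->
    hull_area (gadget c0 c1 k (20 * M + 20)) b =
    (gadget_area c0 c1 k (20 * M + 20) (cot b))%:E.
  move=> hb near_c; apply: (@hull_area_gadget _ _ _ _ M); first exact: sin_gt0_pi.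
  have := ler_norml c0 `|c0|; have := ler_norml c1 `|c1|; rewrite !lexx /=.
  by case: near_c; rewrite ler_norml /M; split=> //; lra.
exists (gadget c0 c1 k (20 * M + 20)).
split; apply: (strict_local_max_cot (f := gadget_area c0 c1 k (20 * M + 20))
  (r := k / 4)); rewrite ?divr_gt0 //.
- by move=> b hb near_c; apply: adm => //; left.
- by move=> c c_neq near_c; apply: gadget_area_peak0.
- by move=> b hb near_c; apply: adm => //; right.
- by move=> c c_neq near_c; apply: gadget_area_peak1.
Qed.

Theorem lemma5 (R : realType) (b0 b1 : R) :
  0 < b0 -> b0 < pi -> 0 < b1 -> b1 < pi ->
  exists P : seq (R * R),
    strict_local_max_on_0pi (hull_area P) b0 /\
    strict_local_max_on_0pi (hull_area P) b1.
Proof.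
move=> b0_gt0 b0_ltpi b1_gt0 b1_ltpi.
have hb0 : 0 < b0 < pi by rewrite b0_gt0 b0_ltpi.
have hb1 : 0 < b1 < pi by rewrite b1_gt0 b1_ltpi.
have [c01|c10] := leP (cot b0) (cot b1); first exact: two_peaks_cot_le.
have [P [max1 max0]] := two_peaks_cot_le hb1 hb0 (ltW c10).
by exists P.
Qed.
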